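(* Let $P$ be any product rule with $P$-product $*$, and suppose that for each $b\in\Sigma$ there is a term $Q_b$ over $\{x,\dot x,y,\dot y\}$ such that $\delta^R_b(f*g)=[\![Q_b]\!]_{[x\mapsto f,\dot x\mapsto\delta^R_bf,y\mapsto g,\dot y\mapsto\delta^R_bg]}$ for all series $f,g$. Then for every $P$-finite series $f$ and every $b\in\Sigma$, the series $\delta^R_bf$ is $P$-finite.
   Context: Let $\Sigma$ be a finite alphabet, $\Sigma^*$ the finite words with empty word $\varepsilon$. A series is $f:\Sigma^*\to\mathbb Q$, $f_w=f(w)$; series form a $\mathbb Q$-vector space under pointwise operations with zero $\mathbb 0$. For $a\in\Sigma$, $\delta_af$ is $w\mapsto f(aw)$ and $\delta^R_af$ is $w\mapsto f(wa)$. Terms over $X$: generated by $u,v::=x\mid 0\mid c\cdot u\mid u+v\mid u*v$. A product rule is a term $P$ over $\{x,\dot x,y,\dot y\}$. The $P$-product $*$ and semantics $[\![u]\!]_\varrho$ of terms under valuations are the unique pair with $(f*g)_\varepsilon=f_\varepsilon g_\varepsilon$, $\delta_a(f*g)=[\![P]\!]_{[x\mapsto f,\dot x\mapsto\delta_af,y\mapsto g,\dot y\mapsto\delta_ag]}$, and $[\![\cdot]\!]_\varrho$ interpreting variables via $\varrho$, constructors by zero, scalar multiplication, addition, $*$. $P$-finite: $A(g_1,\dots,g_k)$ is the smallest set of series containing $\mathbb 0,g_1,\dots,g_k$ closed under scalar multiplication, $+$, $*$; $f$ is $P$-finite if there are $g_1=f,\dots,g_k$ with $\delta_ag_i\in A(g_1,\dots,g_k)$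 for all $i$ and $a\in\Sigma$. *)

From mathcomp Require Import all_boot all_algebra.
Set Implicit Arguments. Unset Strict Implicit. Unset Printing Implicit Defensive.
Import GRing.Theory.
Local Open Scope ring_scope.

Definition series (A : finType) := seq A -> rat.

Definition szero (A : finType) : series A := fun _ => 0.

Definition dl (A : finType) (a : A) (f : series A) : series A :=
  fun w => f (a :: w).
Definition dr (A : finType) (b : A) (f : series A) : series A :=
  fun w => f (rcons w b).

Inductive term (V : Type) : Type :=
| TVar of V
| TZero
| TScale of rat & term V
| TAdd of term V & term V
| TMul of term V & term V.

Inductive pvar : Type := Vx | Vxd | Vy | Vyd.

Definition pval (A : finType) (f f' g g' : series A) (v : pvar) : series A :=
  match v with Vx => f | Vxd => f' | Vy => g | Vyd => g' end.

Fixpoint sem_with (A : finType) (V : Type) (mul : series A -> series A -> series A)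
  (rho : V -> series A) (t : term V) : series A :=
  match t with
  | TVar x => rho x
  | TZero => fun _ => 0
  | TScale c u => fun w => c * sem_with mul rho u w
  | TAdd u v => fun w => sem_with mul rho u w + sem_with mul rho v w
  | TMul u v => mul (sem_with mul rho u) (sem_with mul rho v)
  end.

(* Approximations of the P-product: [prodn P n f g w] is the value of the
   P-product at every word w of length <= n (the value of (f*g)(a w) only
   depends on products evaluated at the shorter word w). *)
Fixpoint prodn (A : finType) (P : term pvar) (n : nat) (f g : series A) : series A :=
  match n with
  | 0 => fun w => if w is [::] then f [::] * g [::] else 0
  | n'.+1 => fun w =>
      match w with
      | [::] => f [::] * g [::]
      | a :: w' => sem_with (prodn P n') (pval f (dl a f) g (dl a g)) P w'
      end
  end.

(* The P-product:  (f*g)_e = f_e g_e,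
   delta_a (f*g) = [[P]]_[x:=f, x':=delta_a f, y:=g, y':=delta_a g]. *)
Definition pprod (A : finType) (P : term pvar) (f g : series A) : series A :=
  fun w => prodn P (size w) f g w.

Definition sem (A : finType) (P : term pvar) (V : Type) (rho : V -> series A)
  (t : term V) : series A := sem_with (pprod P) rho t.

Inductive gen (A : finType) (P : term pvar) (k : nat) (gs : 'I_k -> series A)
  : series A -> Prop :=
| gen_zero : gen P gs (fun _ => 0)
| gen_base i : gen P gs (gs i)
| gen_scale c h : gen P gs h -> gen P gs (fun w => c * h w)
| gen_add h1 h2 : gen P gs h1 -> gen P gs h2 -> gen P gs (fun w => h1 w + h2 w)
| gen_mul h1 h2 : gen P gs h1 -> gen P gs h2 -> gen P gs (pprod P h1 h2).

Definition Pfinite (A : finType) (P : term pvar) (f : series A) : Prop :=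
  exists (k : nat) (gs : 'I_k.+1 -> series A),
    gs ord0 = f /\ forall (i : 'I_k.+1) (a : A), gen P gs (dl a (gs i)).

From mathcomp Require Import all_boot all_algebra.
Set Implicit Arguments. Unset Strict Implicit.

(* Left and right derivatives commute, so if [g_1..g_k] witnesses P-finiteness
   of [f], the family [delta^R_b g_1..delta^R_b g_k, g_1..g_k] witnesses it for
   [delta^R_b f]: the rule [Q_b] shows that [delta^R_b] maps [A(g)] into the
   algebra generated by this larger family. *)

Definition right_product_rule (A : finType) (P : term pvar) (b : A)
    (Q : term pvar) :=
  forall f g : series A, dr b (pprod P f g) = sem P (pval f (dr b f) g (dr b g)) Q.

Section Generated.
Variables (A : finType) (P : term pvar).

Lemma gen_sem k (gs : 'I_k -> series A) (V : Type) (rho : V -> series A) t :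
  (forall v, gen P gs (rho v)) -> gen P gs (sem P rho t).
Proof.
move=> gen_rho; rewrite /sem.
elim: t => [v||c u IHu|u IHu v IHv|u IHu v IHv] /=.
- exact: gen_rho.
- exact: gen_zero.
- exact: gen_scale.
- exact: gen_add.
- exact: gen_mul.
Qed.

Lemma gen_sub k k' (gs : 'I_k -> series A) (gs' : 'I_k' -> series A) h :
  (forall i, gen P gs' (gs i)) -> gen P gs h -> gen P gs' h.
Proof.
move=> sub_gs; elim=> [|i|c ? _ IH|? ? _ IH1 _ IH2|? ? _ IH1 _ IH2].
- exact: gen_zero.
- exact: sub_gs.
- exact: gen_scale.
- exact: gen_add.
- exact: gen_mul.
Qed.

Lemma gen_dr (b : A) (Q : term pvar) k k'
    (gs : 'I_k -> series A) (gs' : 'I_k' -> series A) h :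
  right_product_rule P b Q ->
  (forall i, gen P gs' (gs i)) -> (forall i, gen P gs' (dr b (gs i))) ->
  gen P gs h -> gen P gs' (dr b h).
Proof.
move=> rule_Q sub_gs sub_dr_gs.
elim=> [|i|c ? _ IH|? ? _ IH1 _ IH2|h1 h2 gen_h1 IH1 gen_h2 IH2].
- exact: gen_zero.
- exact: sub_dr_gs.
- exact: gen_scale.
- exact: gen_add.
- rewrite rule_Q; apply: gen_sem => -[] /=.
  + exact: gen_sub gen_h1.
  + exact: IH1.
  + exact: gen_sub gen_h2.
  + exact: IH2.
Qed.

Definition fam_cat m n (gs : 'I_m -> series A) (hs : 'I_n -> series A)
    (i : 'I_(m + n)) : series A :=
  match split i with inl j => gs j | inr j => hs j end.

Lemma fam_cat_lshift m n (gs : 'I_m -> series A) (hs : 'I_n -> series A) i :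
  fam_cat gs hs (lshift n i) = gs i.
Proof. by rewrite /fam_cat -[lshift n i]/(unsplit (inl i)) unsplitK. Qed.

Lemma fam_cat_rshift m n (gs : 'I_m -> series A) (hs : 'I_n -> series A) i :
  fam_cat gs hs (rshift m i) = hs i.
Proof. by rewrite /fam_cat -[rshift m i]/(unsplit (inr i)) unsplitK. Qed.

Lemma fam_catP m n (gs : 'I_m -> series A) (hs : 'I_n -> series A) i :
  (exists j, fam_cat gs hs i = gs j) \/ (exists j, fam_cat gs hs i = hs j).
Proof. by rewrite /fam_cat; case: split => j; [left | right]; exists j. Qed.

Lemma gen_fam_cat_l m n (gs : 'I_m -> series A) (hs : 'I_n -> series A) i :
  gen P (fam_cat gs hs) (gs i).
Proof. by rewrite -(fam_cat_lshift gs hs); apply: gen_base. Qed.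

Lemma gen_fam_cat_r m n (gs : 'I_m -> series A) (hs : 'I_n -> series A) i :
  gen P (fam_cat gs hs) (hs i).
Proof. by rewrite -(fam_cat_rshift gs hs); apply: gen_base. Qed.

End Generated.

Lemma dl_dr (A : finType) (a b : A) (h : series A) :
  dl a (dr b h) = dr b (dl a h).
Proof. by []. Qed.

Theorem mainTheorem16 (A : finType) (P : term pvar) :
  (forall b : A, exists Qb : term pvar, forall f g : series A,
      dr b (pprod P f g) = sem P (pval f (dr b f) g (dr b g)) Qb) ->
  forall (f : series A) (b : A), Pfinite P f -> Pfinite P (dr b f).
Proof.
move=> rules f b [k [gs [gs0 dl_gs]]].
have [Q rule_Q] := rules b.
pose gs' := fam_cat (fun i => dr b (gs i)) gs.
have sub_gs i : gen P gs' (gs i) by exact: gen_fam_cat_r.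
have sub_dr_gs i : gen P gs' (dr b (gs i)) by exact: gen_fam_cat_l.
(* [k.+1 + k.+1] is convertible to [(k + k.+1).+1]. *)
exists (k + k.+1), gs'; split.
  have -> : ord0 = lshift k.+1 (ord0 : 'I_k.+1) by apply: val_inj.
  by rewrite /gs' fam_cat_lshift gs0.
move=> i a; rewrite /gs'; case: (fam_catP (fun i => dr b (gs i)) gs i) => -[j ->].
- by rewrite dl_dr; apply: gen_dr rule_Q sub_gs sub_dr_gs (dl_gs j a).
- exact: gen_sub sub_gs (dl_gs j a).
Qed.
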